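(* Let $g\ge 1$ be an integer and let $A=\{a_1<\cdots<a_m\}\subset\mathbb N$ be a $\mathcal D[g]$ set. Then $$a_m\ \ge\ \frac1g\binom{m}{\lfloor m/2\rfloor}-1,$$ and hence $\binom{m}{\lfloor m/2\rfloor}\le g(a_m+1)$.
   Context: For a positive integer $g$, a set $\mathcal S=\{a_1<a_2<\cdots\}\subset\mathbb N$ (finite or infinite) is a $\mathcal D[g]$ set if for every $m$ (for which $a_m$ exists) and every $t\in\mathbb Z$, $$\left|\left\{I\subseteq\{1,\dots,m\}:\ \sum_{i\in I}a_i=t\right\}\right|\le g.$$ *)

From mathcomp Require Import all_boot all_order all_algebra.
Set Implicit Arguments. Unset Strict Implicit. Unset Printing Implicit Defensive.

(* A finite set A = {a_1 < ... < a_m} of positive integers is represented by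
   a : 'I_m -> nat, strictly increasing, with a i >= 1.  Index i : 'I_m
   corresponds to a_{i+1}. *)

Definition subset_sum_count (m : nat) (a : 'I_m -> nat) (k t : nat) : nat :=
  #|[set I : {set 'I_m} | [forall i in I, (i < k)%N] & (\sum_(i in I) a i == t)]|.

(* D[g] property: for every prefix length k (1 <= k <= m) and every target t,
   at most g subsets of {a_1,...,a_k} have sum t.  (Targets t in Z: negative
   targets have no representations, so t ranging over nat is equivalent.) *)
Definition D_set (g m : nat) (a : 'I_m -> nat) : Prop :=
  forall (k : nat), (1 <= k <= m)%N -> forall t : nat, (subset_sum_count a k t <= g)%N.

(* Put M := a_m and let S be the sum of all the a_i.  Adding the elements one at a
   time in increasing order, as in de Bruijn's symmetric chain decomposition, all
   subsets can be partitioned into saturated chains h < ... < l whose end sums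
   satisfy |(sum h + sum l) - S| <= M: a chain h < y < ... < l' < l and its copy
   shifted by the new element x are recombined either as h < x|h < ... < x|l and
   y < ... < l, or as h < ... < l < x|l and x|h < ... < x|l', whichever keeps
   this balance.
   Consecutive sums along a chain differ by at most M, so every chain contains a
   set B with |2 sum B - S| <= M, while it contains at most one set of size
   floor(m/2).  Hence C(m, floor(m/2)) is at most the number of such B, whose sums
   take at most M + 1 values, each at most g times by the D[g] property. *)

From mathcomp Require Import all_boot all_order all_algebra.
From mathcomp Require Import zify.
Import Order.TTheory GRing.Theory Num.Theory.
Set Implicit Arguments. Unset Strict Implicit. Unset Printing Implicit Defensive.

Definition within (M x y : nat) := (x <= y + M) && (y <= x + M).
Arguments within : simpl never.

Lemma withinD M x y d : within M (x + d) (y + d) = within M x y.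
Proof. by rewrite /within addnAC leq_add2r addnAC leq_add2r. Qed.

Lemma card_range_le (T : finType) (f : T -> nat) (g lo N : nat) :
  (forall t, #|[set x | f x == t]| <= g) ->
  #|[set x | lo <= f x <= lo + N]| <= N.+1 * g.
Proof.
move=> fibre_le; pose p x : 'I_N.+1 := inord (f x - lo).
rewrite -sum1_card (partition_big p xpredT) //=.
apply: (@leq_trans (\sum_(t < N.+1) g)); last by rewrite sum_nat_const card_ord.
apply: leq_sum => t _; rewrite sum1dep_card; apply: leq_trans (fibre_le (lo + t)).
apply: subset_leq_card; apply/subsetP => x; rewrite !inE => /andP[/andP[lo_x x_hi] /eqP <-].
by rewrite inordK; lia.
Qed.

Lemma subsetU1_notin (T : finType) x (A B : {set T}) :
  x \notin A -> (A \subset x |: B) = (A \subset B).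
Proof.
move=> xA; rewrite -subDset; suff -> : A :\ x = A by [].
by apply/setP => i; rewrite !inE; case: eqP => // ->; rewrite (negbTE xA).
Qed.

Section Chains.
Variables (n : nat) (a : 'I_n.+1 -> nat).
Implicit Types (A B : {set 'I_n.+1}) (c : seq {set 'I_n.+1}).

Definition ssum B := \sum_(i in B) a i.
Definition covby A B := (A \subset B) && (#|B| == #|A|.+1).

Lemma ssum_setU1 x B : x \notin B -> ssum (x |: B) = a x + ssum B.
Proof. by move=> xB; rewrite /ssum big_setU1. Qed.

Lemma covby_setU1 x A : x \notin A -> covby A (x |: A).
Proof. by move=> xA; rewrite /covby subsetU1 cardsU1 xA eqxx. Qed.

Lemma covby_setU1r x A B : covby A B -> x \notin B -> covby (x |: A) (x |: B).
Proof.
move=> /andP[sAB /eqP cB] xB; have xA : x \notin A by apply: contra xB; apply/subsetP.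
by rewrite /covby setUS //= !cardsU1 xA xB cB.
Qed.

Lemma covbyP A B : covby A B -> exists2 j, j \notin A & B = j |: A.
Proof.
move=> /andP[sAB /eqP cB].
have /cards1P[j BA] : #|B :\: A| == 1 by rewrite cardsD (setIidPr sAB) cB subSnn.
have jBA : j \in B :\: A by rewrite BA set11.
exists j; first by move: jBA; rewrite inE => /andP[].
by rewrite -{1}(setID B A) BA (setIidPr sAB) setUC.
Qed.

Lemma covby_ssum_le N A B : covby A B -> (forall j, j \in B -> a j <= N) ->
  ssum A <= ssum B <= ssum A + N.
Proof.
move=> /covbyP[j jA ->] le_N; rewrite ssum_setU1 //.
by have := le_N j (setU11 j A); lia.
Qed.

Lemma count_card_path_le1 l h t : path covby h t ->
  count (fun B => #|B| == l) (h :: t) <= 1.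
Proof.
move=> p; rewrite -(count_map (fun B => #|B|) (pred1 l)) count_uniq_mem ?leq_b1 //.
apply: (sorted_uniq ltn_trans ltnn); rewrite /= path_map.
by apply: sub_path p => A B /andP[_ /eqP] /= ->.
Qed.

Lemma path_ssum_le h t : path covby h t -> ssum h <= ssum (last h t).
Proof.
elim: t h => [|B t IH] h //= /andP[/covbyP[j jh ->] p].
by apply: leq_trans (IH _ p); rewrite ssum_setU1 ?leq_addl.
Qed.

Lemma path_setU1 x A p : path covby A p -> (forall B, B \in A :: p -> x \notin B) ->
  path covby (x |: A) [seq x |: B | B <- p].
Proof.
elim: p A => [|B p IH] A //= /andP[AB p_B] x_notin.
rewrite covby_setU1r ?x_notin ?mem_head ?inE ?eqxx ?orbT //=.
by apply: IH => // C C_in; apply: x_notin; rewrite inE C_in orbT.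
Qed.

Definition split_chain S x c :=
  if c is h :: t then
    if S <= ssum h + ssum (last h t) then [:: h :: [seq x |: B | B <- c]; t]
    else [:: rcons c (x |: last h t); [seq x |: B | B <- belast h t]]
  else [::].

Lemma split_chain_perm S x c :
  perm_eq (flatten (split_chain S x c)) (c ++ [seq x |: B | B <- c]).
Proof.
case: c => [|h t] //=; case: ifP => _ /=; rewrite !cats0.
  by rewrite perm_cons perm_sym perm_catC.
rewrite perm_cons cat_rcons perm_cat2l.
by rewrite -[_ :: map _ t]/(map _ (h :: t)) [h :: t]lastI map_rcons perm_sym perm_rcons.
Qed.

Definition prefix k : {set 'I_n.+1} := [set i : 'I_n.+1 | i < k].

Fixpoint chains k :=
  if k is k'.+1 then flatten [seq split_chain (ssum (prefix k')) (inord k') c | c <- chains k']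
  else [:: [:: set0]].

Lemma prefix0 : prefix 0 = set0.
Proof. by apply/setP => i; rewrite !inE. Qed.

Lemma prefix_ord k : n < k -> prefix k = setT.
Proof. by move=> lt_nk; apply/setP => i; rewrite !inE (leq_trans (ltn_ord i)). Qed.

Lemma inord_notin_prefix k : k <= n -> (inord k : 'I_n.+1) \notin prefix k.
Proof. by move=> le_kn; rewrite inE inordK ?ltnn. Qed.

Lemma prefixS k : k <= n -> prefix k.+1 = inord k |: prefix k.
Proof.
move=> le_kn; apply/setP => i; rewrite !inE ltnS leq_eqVlt -val_eqE /= inordK //.
Qed.

Lemma flatten_split_chains_perm S x chs :
  perm_eq (flatten (flatten [seq split_chain S x c | c <- chs]))
          (flatten chs ++ [seq x |: B | B <- flatten chs]).
Proof.
elim: chs => [|c chs IH] //=; rewrite flatten_cat map_cat.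
by apply: perm_trans (perm_cat (split_chain_perm S x c) IH) _; rewrite perm_catACA.
Qed.

Lemma chains_partition k : k <= n.+1 ->
  uniq (flatten (chains k)) /\ forall B, (B \in flatten (chains k)) = (B \subset prefix k).
Proof.
elim: k => [|k IH] lt_k /=; first by split=> // B; rewrite prefix0 subset0 inE.
have [uniq_s mem_s] := IH (ltnW lt_k).
set s := flatten (chains k) in uniq_s mem_s *; set x : 'I_n.+1 := inord k.
have x_notin B : B \in s -> x \notin B.
  by rewrite mem_s => /subsetP sBk; apply: contra (sBk x) _; apply: inord_notin_prefix.
have perm_s := flatten_split_chains_perm (ssum (prefix k)) x (chains k).
rewrite -/s in perm_s; split.
  rewrite (perm_uniq perm_s) cat_uniq uniq_s /=; apply/andP; split.
    by apply/hasPn => _ /mapP[B Bs ->]; apply/negP => /x_notin; rewrite setU11.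
  rewrite map_inj_in_uniq // => A B As Bs /(congr1 (fun C => C :\ x)).
  by rewrite !setU1K ?x_notin.
move=> B; rewrite (perm_mem perm_s) mem_cat prefixS //.
have [xB|xB] := boolP (x \in B).
  have /negbTE-> : B \notin s by apply: contraL xB => /x_notin.
  rewrite -subDset -mem_s; apply/mapP/idP => [[C Cs ->]|BDs]; first by rewrite setU1K ?x_notin.
  by exists (B :\ x); rewrite ?setD1K.
have /negbTE-> : B \notin [seq x |: C | C <- s].
  by apply/mapP => -[C _ BC]; move: xB; rewrite BC setU11.
by rewrite orbF subsetU1_notin // -mem_s.
Qed.

Section Window.
Variable M : nat.
Hypothesis a_le_M : forall i, a i <= M.

Definition window S B := within M (2 * ssum B) S.

Definition good_chain S c :=
  if c is h :: t then path covby h t && within M (ssum h + ssum (last h t)) S else true.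

Lemma path_has_window S h t : path covby h t ->
  2 * ssum h <= S + M -> S <= 2 * ssum (last h t) + M -> has (window S) (h :: t).
Proof.
elim: t h => [|B t IH] h /=; first by rewrite /window /within => _ -> ->.
move=> /andP[hB p_Bt] h_lo B_hi; rewrite /window /within h_lo /=.
case: leqP => //= h_hi; apply: IH => //.
by have /andP[_ +] := covby_ssum_le hB (fun j _ => a_le_M j); lia.
Qed.

Lemma good_chain_has_window S h t : good_chain S (h :: t) -> has (window S) (h :: t).
Proof.
move=> /andP[p_ht /andP[lo hi]]; have := path_ssum_le p_ht.
by move=> h_le; apply: path_has_window => //; lia.
Qed.

Lemma good_split_chain S x c : good_chain S c ->
  (forall B, B \in c -> x \notin B) -> (forall B j, B \in c -> j \in B -> a j <= a x) ->
  all (good_chain (S + a x)) (split_chain S x c).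
Proof.
have ax_le_M := a_le_M x.
case: c => [|h t] // /andP[p_ht /andP[lo hi]] x_notin le_ax /=.
have xh : x \notin h by apply: x_notin; rewrite mem_head.
have xl : x \notin last h t by apply: x_notin; rewrite mem_last.
case: ifP => S_le /=; rewrite andbT; apply/andP; split.
- rewrite covby_setU1 //= path_setU1 //= last_map ssum_setU1 // addnCA addnC withinD.
  exact/andP.
- case: t p_ht lo hi S_le x_notin le_ax {xl} => [|y t] //= /andP[hy p_yt] lo hi S_le _ le_ax.
  have le_y j : j \in y -> a j <= a x by apply: le_ax; rewrite !inE eqxx orbT.
  rewrite p_yt /=; have := covby_ssum_le hy le_y.
  by rewrite /within => /andP[? ?]; apply/andP; split; lia.
- rewrite rcons_path p_ht covby_setU1 //= last_rcons ssum_setU1 // addnCA addnC withinD.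
  exact/andP.
- case/lastP: t p_ht lo hi S_le x_notin le_ax {xl} => [|t l] //.
  rewrite rcons_path last_rcons belast_rcons /= => /andP[p_ht lt_l] lo hi S_le x_notin le_ax.
  have le_l j : j \in l -> a j <= a x by apply: le_ax; rewrite inE mem_rcons mem_head orbT.
  have x_notin' B : B \in h :: t -> x \notin B.
    rewrite inE => /orP[/eqP->|Bt]; apply: x_notin.
      exact: mem_head.
    by rewrite !inE mem_rcons inE Bt !orbT.
  rewrite path_setU1 //= last_map !ssum_setU1 ?x_notin' ?mem_head ?mem_last //.
  have := covby_ssum_le lt_l le_l.
  by rewrite /within => /andP[? ?]; apply/andP; split; lia.
Qed.

Lemma card_window_le g S : (forall t, #|[set B | ssum B == t]| <= g) ->
  #|[set B | window S B]| <= M.+1 * g.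
Proof.
move=> fibre_le; apply: leq_trans (card_range_le ((S - M).+1 %/ 2) M fibre_le).
apply: subset_leq_card; apply/subsetP => B; rewrite !inE /window /within => /andP[lo hi].
by apply/andP; split; lia.
Qed.

Hypothesis a_mono : {homo a : i j / i <= j}.

Lemma chains_good k : k <= n.+1 -> all (good_chain (ssum (prefix k))) (chains k).
Proof.
elim: k => [|k IH] lt_k /=; first by rewrite prefix0 /ssum big_set0 /within.
have [_ mem_s] := chains_partition (ltnW lt_k).
set x : 'I_n.+1 := inord k.
rewrite prefixS // ssum_setU1 ?inord_notin_prefix // addnC.
apply/allP => c' /flattenP[_ /mapP[c c_in ->]]; apply/allP.
have sub_k B : B \in c -> B \subset prefix k.
  by move=> Bc; rewrite -mem_s; apply/flattenP; exists c.
apply: good_split_chain; first exact: (allP (IH (ltnW lt_k))).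
  move=> B /sub_k /subsetP sBk; apply: contra (sBk x) _; exact: inord_notin_prefix.
move=> B j /sub_k /subsetP sBk /sBk; rewrite inE => lt_jk.
by apply: a_mono; rewrite inordK // ltnW.
Qed.

Lemma binomial_le_card_window l : 'C(n.+1, l) <= #|[set B | window (ssum setT) B]|.
Proof.
have [uniq_s mem_s] := chains_partition (leqnn n.+1).
have good := chains_good (leqnn n.+1); rewrite prefix_ord // in mem_s good.
have card_count (P : pred {set 'I_n.+1}) :
    #|[set B | P B]| = count P (flatten (chains n.+1)).
  rewrite -sum1dep_card -sum1_count; apply/esym/perm_big/uniq_perm => //.
    exact: index_enum_uniq.
  by move=> B; rewrite mem_s subsetT mem_index_enum.
have := card_draws 'I_n.+1 l; rewrite card_ord => <-.
rewrite !card_count !count_flatten !sumnE !big_map big_seq [X in _ <= X]big_seq.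
apply: leq_sum => -[|h t] // c_in; apply: leq_trans (count_card_path_le1 _ _) _.
  by have /andP[] := allP good _ c_in.
by rewrite -has_count good_chain_has_window // (allP good).
Qed.

End Window.

End Chains.

Theorem theorem4 (g m : nat) (a : 'I_m.+1 -> nat) :
  (1 <= g)%N ->
  (forall i, (0 < a i)%N) ->
  (forall i j : 'I_m.+1, (i < j)%N -> (a i < a j)%N) ->
  D_set g a ->
  ((a ord_max)%:R >= (g%:R)^-1 * ('C(m.+1, m.+1./2))%:R - 1 :> rat)%R
  /\ ('C(m.+1, m.+1./2) <= g * (a ord_max + 1))%N.
Proof.
move=> g_gt0 _ a_incr D_a.
have a_mono : {homo a : i j / i <= j}.
  by move=> i j; rewrite leq_eqVlt => /orP[/eqP/val_inj-> | /a_incr/ltnW].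
have a_le_max i : a i <= a ord_max by apply: a_mono; rewrite -ltnS.
have fibre_le t : #|[set B | ssum a B == t]| <= g.
  have all_indices : 1 <= m.+1 <= m.+1 by rewrite leqnn.
  apply: leq_trans (D_a m.+1 all_indices t); apply/eq_leq/eq_card => B; rewrite !inE.
  by have -> : [forall i in B, i < m.+1] by apply/forall_inP => i _; exact: ltn_ord.
have binom_le : 'C(m.+1, m.+1./2) <= g * (a ord_max + 1).
  rewrite mulnC addn1; apply: leq_trans (card_window_le (a ord_max) _ fibre_le).
  exact: binomial_le_card_window.
split=> //.
rewrite lerBlDr ler_pdivrMl ?ltr0n // natr1 -natrM ler_nat.
by rewrite addn1 in binom_le.
Qed.
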